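(* Let $V$ be a vertex operator algebra, fix $n\in\mathbb{N}$, and let $u\in V$ be an element of weight $\mathrm{wt}\,u\ge -n$ such that the vertex subalgebra $V^u=\langle u\rangle^1$ satisfies the permutation property. Then $A_n^u$ is generated by the elements \[ u_{-2n-1}^{i_{2n+1}}u_{-2n}^{i_{2n}}\cdots u_{-1}^{i_1}\mathbf{1}+O_n(V),\qquad i_1,\dots,i_{2n+1}\in\mathbb{N}. \] Moreover, if $V^u$ acts strongly on a subset $W\subset V$, then every element of $A_n^u.W$ can be written, modulo $O_n^\circ(V)$, as a linear combination of elements $u_{-2n-1}^{i_{2n+1}}u_{-2n}^{i_{2n}}\cdots u_{-1}^{i_1}v+O_n(V)$ with $v\in W$ and $i_1,\dots,i_{2n+1}\in\mathbb{N}$.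
   Context: $V$ has vacuum $\mathbf{1}$, modes $Y(v,x)=\sum v_kx^{-k-1}$, Virasoro operators $L(m)$, weights $\mathrm{wt}$. For homogeneous $a$, $a\circ_nb=\mathrm{Res}_x(1+x)^{\mathrm{wt}\,a+n}Y(a,x)b\,x^{-2n-2}$; $O_n^\circ(V)=\mathrm{span}\{a\circ_nb\}$, $O^L(V)=\{(L(-1)+L(0))v\}$, $O_n(V)=O^L(V)+O_n^\circ(V)$, and $A_n(V)=V/O_n(V)$ is the level $n$ Zhu algebra with product $a*_nb=\sum_{m=0}^n(-1)^m\binom{m+n}{n}\mathrm{Res}_x(1+x)^{\mathrm{wt}\,a+n}Y(a,x)b\,x^{-n-m-1}$. $V^u=\langle u\rangle^1$ is the span of all $u_{-k_1}\cdots u_{-k_r}\mathbf{1}$ ($r\in\mathbb{N}$, $k_i\in\mathbb{Z}_+$), assumed to be a vertex subalgebra. For $v\in V$, $F_r(v)$ is the span of $u_{-k_1}\cdots u_{-k_p}v$ with $p\le r$ and $k_i\ge1$. The permutation property for $V^u$ acting on $W$ means: for all $m\in\mathbb{Z}_+$, permutations $\sigma$ of $\{1,\dots,m\}$, $u^{(1)},\dots,u^{(m)}\in V^u$, $v\in W$ and $k_1,\dots,k_m\in\mathbb{Z}$, $u^{(1)}_{-k_1}\cdots u^{(m)}_{-k_m}v-u^{(\sigma(1))}_{-k_{\sigma(1)}}\cdots u^{(\sigma(m))}_{-k_{\sigma(m)}}v\in F_{m-1}(v)$; ''$V^u$ satisfies the permutation property'' means this with $W=V^u$. $V^u$ acts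 strongly on $W$ if it satisfies the permutation property on $W$ and $a_jw=0$ for all $a\in V^u$, $w\in W$, $j\ge0$. $A_n^u$ is the subalgebra of $A_n(V)$ generated by $\{a+O_n(V):a\in V^u\}$, and $A_n^u.W$ is the set of elements $u_{-k_1}\cdots u_{-k_m}v+O_n(V)$ with $v\in W$, $m\in\mathbb{N}$, $k_i\in\mathbb{Z}_+$. *)

From HB Require Import structures.
Set Warnings "-notation-overridden,-ambiguous-paths".
From mathcomp Require Import all_boot all_order all_algebra all_fingroup.
Set Implicit Arguments.
Unset Strict Implicit.
Unset Printing Implicit Defensive.
Import Order.TTheory GRing.Theory Num.Theory.
Local Open Scope ring_scope.

Inductive Span (K : numClosedFieldType) (V : lmodType K) (P : V -> Prop) : V -> Prop :=
| Span0 : Span P 0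
| SpanIn x : P x -> Span P x
| SpanLC (c : K) x y : Span P x -> Span P y -> Span P (c *: x + y).

Definition binz {K : numClosedFieldType} (z : int) (i : nat) : K :=
  (\prod_(j < i) (z%:~R - j%:R)) / (i`!)%:R.

(* A vertex operator algebra: modes a_m (Y(a,x) = sum a_m x^{-m-1}), vacuum,
   conformal vector omega with L(m) = omega_(m+1), central charge cc,
   Z-grading by L(0)-eigenvalue given by projections gproj k onto V_k
   (with a finite support list gsupp v), a truncation bound trunc a b. *)
Record VOA (K : numClosedFieldType) : Type := MkVOA {
  vspace :> lmodType K;
  mode : vspace -> int -> vspace -> vspace;
  vac : vspace;
  omega : vspace;
  cc : K;
  gproj : int -> vspace -> vspace;
  gsupp : vspace -> seq int;
  trunc : vspace -> vspace -> nat;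
  mode_linl : forall m b (c : K) a1 a2,
      mode (c *: a1 + a2) m b = c *: mode a1 m b + mode a2 m b;
  mode_linr : forall a m (c : K) b1 b2,
      mode a m (c *: b1 + b2) = c *: mode a m b1 + mode a m b2;
  trunc_spec : forall a b (m : int), (trunc a b)%:Z <= m -> mode a m b = 0;
  vac_mode : forall m v, mode vac m v = if m == -1 then v else 0;
  mode_vac_create : forall a, mode a (-1) vac = a;
  mode_vac_pos : forall a (m : int), 0 <= m -> mode a m vac = 0;
  borcherds : forall a b c (l m n : int) (N : nat),
    (forall i : nat, (N <= i)%N ->
       [/\ mode a (l + i%:Z) b = 0, mode b (n + i%:Z) c = 0
         & mode a (m + i%:Z) c = 0]) ->
    \sum_(i < N) binz m i *: mode (mode a (l + i%:Z) b) (m + n - i%:Z) c =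
    \sum_(i < N) ((-1) ^+ i * binz l i) *:
       (mode a (l + m - i%:Z) (mode b (n + i%:Z) c)
        - (-1) ^+ `|l|%N *: mode b (l + n - i%:Z) (mode a (m + i%:Z) c));
  virasoro : forall (m n : int) v,
    mode omega (m + 1) (mode omega (n + 1) v)
    - mode omega (n + 1) (mode omega (m + 1) v)
    = (m - n)%:~R *: mode omega (m + n + 1) v
      + (if m + n == 0 then (m ^+ 3 - m)%:~R / 12%:R * cc else 0) *: v;
  translation : forall a (m : int) v,
    mode (mode omega 0 a) m v = (- m)%:~R *: mode a (m - 1) v;
  gproj_lin : forall k (c : K) x y,
    gproj k (c *: x + y) = c *: gproj k x + gproj k y;
  gproj_orth : forall j k v,
    gproj j (gproj k v) = if j == k then gproj k v else 0;
  gsupp_uniq : forall v, uniq (gsupp v);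
  gsupp_sum : forall v, v = \sum_(k <- gsupp v) gproj k v;
  gsupp_out : forall v k, k \notin gsupp v -> gproj k v = 0;
  L0_wt : forall k v, mode omega 1 (gproj k v) = k%:~R *: gproj k v;
  gfin : forall k, exists s : seq vspace,
    forall v, Span (fun x => x \in s) (gproj k v);
  gbelow : exists N : int, forall k v, k < N -> gproj k v = 0;
  vac_wt : gproj 0 vac = vac;
  omega_wt : gproj 2 omega = omega
}.

Section VOADefs.
Variables (K : numClosedFieldType) (V : VOA K).

Definition homog (k : int) (a : V) : Prop := gproj k a = a.

(* a o_n b for a homogeneous of weight k *)
Definition circ_hom (n : nat) (k : int) (a b : V) : V :=
  \sum_(i < trunc a b + 2 * n + 2)
     binz (k + n%:Z) i *: mode a (i%:Z - (2 * n + 2)%:Z) b.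

(* a *_n b for a homogeneous of weight k *)
Definition star_hom (n : nat) (k : int) (a b : V) : V :=
  \sum_(m < n.+1) ((-1) ^+ m * ('C(m + n, n))%:R) *:
    \sum_(i < trunc a b + n + m + 1)
       binz (k + n%:Z) i *: mode a (i%:Z - (n + m + 1)%:Z) b.

(* linear extension in the first argument via the grading *)
Definition star (n : nat) (a b : V) : V :=
  \sum_(k <- gsupp a) star_hom n k (gproj k a) b.

Definition Ocirc (n : nat) : V -> Prop :=
  Span (fun v => exists k a b, homog k a /\ v = circ_hom n k a b).

Definition OL (v : V) : Prop :=
  exists w, v = mode (omega V) 0 w + mode (omega V) 1 w.

Definition On (n : nat) (v : V) : Prop :=
  exists x y, OL x /\ Ocirc n y /\ v = x + y.

(* preimage in V of the subalgebra of A_n(V) generated by the classes of X *)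
Inductive GenAlg (n : nat) (X : V -> Prop) : V -> Prop :=
| GA_O v : On n v -> GenAlg n X v
| GA_gen v : X v -> GenAlg n X v
| GA_one : GenAlg n X (vac V)
| GA_lc (c : K) x y : GenAlg n X x -> GenAlg n X y -> GenAlg n X (c *: x + y)
| GA_mul x y : GenAlg n X x -> GenAlg n X y -> GenAlg n X (star n x y).

(* u_{-(k1+1)} ... u_{-(kr+1)} v *)
Definition monom (u : V) (ks : seq nat) (v : V) : V :=
  foldr (fun k w => mode u (- (k.+1)%:Z) w) v ks.

Definition Vu (u : V) : V -> Prop :=
  Span (fun v => exists ks, v = monom u ks (vac V)).

Definition Fr (u : V) (r : nat) (v : V) : V -> Prop :=
  Span (fun w => exists ks, (size ks <= r)%N /\ w = monom u ks v).

Definition gmon (ps : seq (V * int)) (v : V) : V :=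
  foldr (fun p w => mode p.1 (- p.2) w) v ps.

Definition perm_prop (u : V) (W : V -> Prop) : Prop :=
  forall (m : nat) (s : 'S_m) (us : 'I_m -> V) (ks : 'I_m -> int) (v : V),
    (0 < m)%N -> (forall i, Vu u (us i)) -> W v ->
    Fr u m.-1 v (gmon [seq (us i, ks i) | i <- enum 'I_m] v
                 - gmon [seq (us (s i), ks (s i)) | i <- enum 'I_m] v).

Definition acts_strongly (u : V) (W : V -> Prop) : Prop :=
  perm_prop u W /\
  forall a w (j : int), Vu u a -> W w -> 0 <= j -> mode a j w = 0.

(* pm j [i_{j+1}; i_{j+2}; ...] v = ... u_{-(j+2)}^{i_{j+2}} u_{-(j+1)}^{i_{j+1}} v *)
Fixpoint pm (u : V) (j : nat) (ii : seq nat) (v : V) : V :=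
  match ii with
  | [::] => v
  | i :: ii' => pm u j.+1 ii' (iter i (mode u (- (j.+1)%:Z)) v)
  end.

(* pmon u [i_1; ...; i_N] v = u_{-N}^{i_N} ... u_{-1}^{i_1} v *)
Definition pmon (u : V) (ii : seq nat) (v : V) : V := pm u 0 ii v.

End VOADefs.

From HB Require Import structures.
Set Warnings "-notation-overridden,-ambiguous-paths,-redundant-canonical-projection".
From mathcomp Require Import all_boot all_order all_algebra all_fingroup.
From mathcomp Require Import zify ring.
Set Implicit Arguments.
Unset Strict Implicit.
Unset Printing Implicit Defensive.
Import Order.TTheory GRing.Theory Num.Theory.
Local Open Scope ring_scope.

(* For a of weight w, the residue Res_x (1 + x)^(w + n + m) Y(a, x) b x^(-2n-2-m)
   lies in O°_n for every m >= 0: for m = 0 it is a o_n b, and the translation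
   identity (L(-1) a)_j = - j a_(j-1) writes the residue for m + 1 as a
   combination of the residues for m of a and of L(-1) a, the latter having
   weight w + 1.  For a = u and m = k - 2n - 1 the residue applied to x has
   leading term u_(-k-1) x, so modulo O°_n this mode is a combination of the
   u_(-j) x with j <= k and of nonnegative modes of u on x.
   When V^u acts strongly on W, the permutation property lets us reorder a
   monomial u_(-k_1) ... u_(-k_(r+1)) v, or move a nonnegative mode next to v,
   where it vanishes, at the price of terms in F_r(v).  Induction on the length
   of the monomial and then on the sum of its indices therefore brings every
   monomial to ordered monomials with all indices at most 2n + 1.  The first
   claim is the case W = {1}. *)

Section LinearCombinations.
Variables (K : numClosedFieldType) (M : lmodType K).

Lemma Span_add (P : M -> Prop) x y : Span P x -> Span P y -> Span P (x + y).
Proof. by move=> Px Py; rewrite -[x]scale1r; apply: SpanLC. Qed.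

Lemma Span_scale (P : M -> Prop) c x : Span P x -> Span P (c *: x).
Proof. by move=> Px; rewrite -[_ *: _]addr0; apply: SpanLC => //; apply: Span0. Qed.

Lemma sum_seq_delta (I : eqType) (s : seq I) j (F : I -> M) : uniq s ->
  \sum_(k <- s) (if k == j then F k else 0) = if j \in s then F j else 0.
Proof.
move=> us; case: ifP => js.
  by rewrite (bigD1_seq j) //= eqxx big1 ?addr0 // => k /negbTE ->.
by rewrite big1_seq // => k /andP[_ ks]; case: eqP => // kj; rewrite -kj ks in js.
Qed.

Lemma sum_ord_vanish (F : nat -> M) N N' : (N <= N')%N ->
  (forall i, (N <= i)%N -> F i = 0) -> \sum_(i < N') F i = \sum_(i < N) F i.
Proof.
move=> NN' F0; rewrite -!(big_mkord xpredT) (@big_cat_nat _ _ _ N) //=.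
by rewrite [X in _ + X]big1_seq ?addr0 // => i /andP[_]; rewrite mem_index_iota => /andP[/F0].
Qed.

End LinearCombinations.

Section Modes.
Variables (K : numClosedFieldType) (V : VOA K).

HB.instance Definition _ (a : V) m :=
  GRing.isLinear.Build K V V *:%R (mode a m) (mode_linr a m).
HB.instance Definition _ k :=
  GRing.isLinear.Build K V V *:%R (@gproj K V k) (@gproj_lin K V k).

Lemma gproj_L0 j (v : V) : gproj j (mode (omega V) 1 v) = j%:~R *: gproj j v.
Proof.
rewrite {1}(gsupp_sum v) !raddf_sum /=.
transitivity (\sum_(k <- gsupp v) (if k == j then j%:~R *: gproj j v else 0)).
  apply: eq_bigr => k _; rewrite L0_wt linearZ /= gproj_orth eq_sym.
  by case: eqP => [->|_]; rewrite ?scaler0.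
rewrite sum_seq_delta ?gsupp_uniq //.
by case: ifP => // /negbT/gsupp_out ->; rewrite scaler0.
Qed.

Lemma homog_L0 k (x : V) : mode (omega V) 1 x = k%:~R *: x -> homog k x.
Proof.
move=> L0x; have off j : j != k -> gproj j x = 0.
  move=> jk; apply/eqP; have := gproj_L0 j x; rewrite L0x linearZ => /eqP.
  rewrite -subr_eq0 -scalerBl scaler_eq0 -intrB intr_eq0 subr_eq0 eq_sym.
  by rewrite (negbTE jk).
rewrite /homog {2}(gsupp_sum x).
transitivity (\sum_(j <- gsupp x) (if j == k then gproj j x else 0)).
  rewrite sum_seq_delta ?gsupp_uniq //.
  by case: ifP => // /negbT/gsupp_out.
by apply: eq_bigr => j _; case: eqP => // /eqP/off.
Qed.

(* [L(0), L(-1)] = L(-1) *)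
Lemma homog_Lm1 w (a : V) : homog w a -> homog (w + 1) (mode (omega V) 0 a).
Proof.
move=> wa; apply: homog_L0.
have := @virasoro _ V 0 (-1) a.
rewrite add0r addNr sub0r oppr_eq0 oner_eq0 /= scale0r addr0 scale1r.
have -> : mode (omega V) 1 a = w%:~R *: a by rewrite -{1}wa L0_wt wa.
by rewrite linearZ => /eqP; rewrite subr_eq intrD scalerDl scale1r addrC => /eqP.
Qed.


(* Res_x (1 + x)^p Y(a, x) b x^(-q), cut off after N terms; the cut-off is
   harmless once N >= trunc a b + q. *)
Definition resY (a : V) (p : int) (q N : nat) (b : V) : V :=
  \sum_(i < N) binz p i *: mode a (i%:Z - q%:Z) b.

Lemma resY_trunc (a b : V) p q N : (trunc a b + q <= N)%N ->
  resY a p q N b = resY a p q (trunc a b + q) b.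
Proof.
move=> hN; apply: (@sum_ord_vanish _ _ (fun i => binz p i *: mode a (i%:Z - q%:Z) b)) => // i hi.
by rewrite trunc_spec ?scaler0 //; lia.
Qed.

Lemma binz0 p : binz p 0 = 1 :> K.
Proof. by rewrite /binz big_ord0 fact0 mulr1n invr1 mulr1. Qed.

Lemma binzS p i : binz p i.+1 * (i.+1)%:R = p%:~R * binz (p - 1) i :> K.
Proof.
rewrite /binz big_ord_recl factS natrM.
have -> : \prod_(j < i) (p%:~R - (bump 0 j)%:R) = \prod_(j < i) ((p - 1)%:~R - j%:R) :> K.
  by apply: eq_bigr => j _; rewrite /bump /= add1n intrB; ring.
have fact_neq0 : (i`!)%:R != 0 :> K by rewrite pnatr_eq0 -lt0n fact_gt0.
have succ_neq0 : (i.+1)%:R != 0 :> K by rewrite pnatr_eq0.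
by rewrite subr0; field; rewrite fact_neq0 addrC natr1 succ_neq0.
Qed.

(* from (L(-1) a)_m = - m a_(m-1) and i binom(p, i) = p binom(p - 1, i - 1) *)
Lemma resY_translation (a b : V) p q N : (trunc a b + q.+1 <= N)%N ->
  resY (mode (omega V) 0 a) p q N b
  = - p%:~R *: resY a (p - 1) q N b + q%:R *: resY a p q.+1 N b.
Proof.
move=> hN; pose F i := mode a (i%:Z - (q.+1)%:Z) b.
have F0 i : (N <= i)%N -> F i = 0 by move=> hi; apply: trunc_spec; lia.
have -> : resY (mode (omega V) 0 a) p q N b
          = \sum_(i < N) binz p i *: ((q%:R - i%:R) *: F i).
  apply: eq_bigr => i _; rewrite translation /F.
  have -> : i%:Z - q%:Z - 1 = i%:Z - (q.+1)%:Z by lia.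
  by rewrite opprB intrB.
have -> : resY a (p - 1) q N b = \sum_(i < N) binz (p - 1) i *: F i.+1.
  by apply: eq_bigr => i _; rewrite /F; congr (_ *: mode a _ b); lia.
rewrite scaleNr.
have -> : p%:~R *: \sum_(i < N) binz (p - 1) i *: F i.+1
          = \sum_(i < N) (i%:R * binz p i) *: F i.
  rewrite scaler_sumr -(@sum_ord_vanish _ _ (fun i => (i%:R * binz p i) *: F i) N N.+1) //;
    last by move=> i /F0 ->; rewrite scaler0.
  rewrite big_ord_recl /= mul0r scale0r add0r; apply: eq_bigr => i _.
  by rewrite scalerA /bump /= add1n -binzS mulrC.
rewrite /resY scaler_sumr -sumrN -big_split /=; apply: eq_bigr => i _.
by rewrite !scalerA -scaleNr -scalerDl; congr (_ *: _); ring.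
Qed.

Lemma resY_Ocirc n m : forall (w : int) (a b : V) N, homog w a ->
  (trunc a b + (2 * n + 2 + m) <= N)%N ->
  Ocirc n (resY a (w + n%:Z + m%:Z) (2 * n + 2 + m) N b).
Proof.
elim: m => [|m IH] w a b N wa hN.
  rewrite addr0 addn0 resY_trunc; last by rewrite addn0 in hN.
  by apply: SpanIn; exists w, a, b; split => //; rewrite /resY /circ_hom !addnA.
set q := (2 * n + 2 + m)%N; set p := w + 1 + n%:Z + m%:Z.
pose N' := (N + trunc (mode (omega V) 0 a) b + q)%N.
have hN' : (trunc a b + q.+1 <= N')%N by rewrite /N' /q; rewrite addnS in hN; lia.
have OL1a : Ocirc n (resY (mode (omega V) 0 a) p q N' b).
  by apply: IH; [exact: homog_Lm1 | rewrite /N' /q; lia].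
have Oa : Ocirc n (resY a (p - 1) q N' b).
  have -> : p - 1 = w + n%:Z + m%:Z by rewrite /p; lia.
  by apply: IH => //; rewrite /N' /q; rewrite addnS in hN; lia.
have q_neq0 : (q%:R : K) != 0 by rewrite pnatr_eq0 /q; lia.
have -> : w + n%:Z + (m.+1)%:Z = p by rewrite /p; lia.
rewrite addnS -/q resY_trunc; last by rewrite addnS in hN.
rewrite -(resY_trunc p hN') -[resY a p q.+1 N' b](scalerK q_neq0).
have -> : q%:R *: resY a p q.+1 N' b
          = resY (mode (omega V) 0 a) p q N' b + p%:~R *: resY a (p - 1) q N' b.
  by rewrite resY_translation // scaleNr addrAC addNr add0r.
by apply/Span_scale/Span_add => //; apply: Span_scale.
Qed.


Fixpoint pm_exps (j : nat) (ii : seq nat) : seq nat :=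
  if ii is i :: ii' then pm_exps j.+1 ii' ++ nseq i j else [::].

Lemma monom_cat (u : V) s1 s2 v : monom u (s1 ++ s2) v = monom u s1 (monom u s2 v).
Proof. exact: foldr_cat. Qed.

Lemma pm_monom (u : V) ii j v : pm u j ii v = monom u (pm_exps j ii) v.
Proof.
elim: ii j v => [|i ii IH] j v //=; rewrite IH monom_cat; congr monom.
by elim: i => //= i ->.
Qed.

Lemma pm_nseq0 (u : V) k j v : pm u j (nseq k 0%N) v = v.
Proof. by elim: k j v => [|k IH] j v //=; rewrite IH. Qed.

Lemma monom_gmon (u : V) ks v :
  monom u ks v = gmon [seq (u, (k.+1)%:Z) | k <- ks] v.
Proof. by elim: ks => //= k ks ->. Qed.

Lemma gmon_rcons (L : seq (V * int)) p v :
  gmon (rcons L p) v = gmon L (mode p.1 (- p.2) v).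
Proof. exact: foldr_rcons. Qed.

Lemma gmon0 (L : seq (V * int)) : gmon L 0 = 0.
Proof. by elim: L => //= p L ->; rewrite raddf0. Qed.

Lemma Vu_u (u : V) : Vu u u.
Proof. by apply: SpanIn; exists [:: 0%N]; rewrite /= mode_vac_create. Qed.

End Modes.

Lemma count_pm_exps (ks : seq nat) len j0 x :
  count_mem x (pm_exps j0 [seq count_mem j ks | j <- iota j0 len])
  = ((j0 <= x < j0 + len) * count_mem x ks)%N.
Proof.
elim: len j0 => [|len IH] j0 /=; first by rewrite addn0 ltnNge andbN.
rewrite count_cat IH count_nseq /=.
case: (eqVneq x j0) => [->|ne].
  by rewrite ltnn /= leqnn addnS ltnS leq_addr /= mul0n add0n mul1n.
have -> : (j0.+1 <= x)%N = (j0 <= x)%N by rewrite ltn_neqAle eq_sym ne.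
by rewrite addSnnS /= mul0n addn0.
Qed.

Lemma perm_pm_exps_count (ks : seq nat) N : all (fun k => k < N)%N ks ->
  perm_eq (pm_exps 0 [seq count_mem j ks | j <- iota 0 N]) ks.
Proof.
move=> ksN; apply/allP => x _ /=; rewrite count_pm_exps add0n /=.
case: (ltnP x N) => xN; first by rewrite mul1n.
rewrite mul0n eq_sym; apply/eqP/count_memPn/negP => /(allP ksN) /=.
by rewrite ltnNge xN.
Qed.

Section Congruence.
Variables (K : numClosedFieldType) (V : VOA K) (n : nat) (G : V -> Prop).

Definition span_modO (y : V) : Prop := exists x, Span G x /\ Ocirc n (y - x).

Lemma span_modO_lc c y1 y2 :
  span_modO y1 -> span_modO y2 -> span_modO (c *: y1 + y2).
Proof.
move=> [x1 [G1 O1]] [x2 [G2 O2]]; exists (c *: x1 + x2); split; first exact: SpanLC.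
have -> : c *: y1 + y2 - (c *: x1 + x2) = c *: (y1 - x1) + (y2 - x2).
  by rewrite scalerBr opprD addrACA.
exact: SpanLC.
Qed.

Lemma span_modO_Ocirc y : Ocirc n y -> span_modO y.
Proof. by exists 0; split; [apply: Span0 | rewrite subr0]. Qed.

Lemma span_modO_in y : G y -> span_modO y.
Proof. by exists y; split; [apply: SpanIn | rewrite subrr; apply: Span0]. Qed.

Lemma span_modO_add y1 y2 : span_modO y1 -> span_modO y2 -> span_modO (y1 + y2).
Proof. by move=> h1 h2; rewrite -[y1]scale1r; apply: span_modO_lc. Qed.

Lemma span_modO_scale c y : span_modO y -> span_modO (c *: y).
Proof.
move=> h; rewrite -[_ *: _]addr0; apply: span_modO_lc => //.
by apply: span_modO_Ocirc; apply: Span0.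
Qed.

Lemma span_modO_sub y1 y2 : span_modO y1 -> span_modO y2 -> span_modO (y1 - y2).
Proof. by move=> h1 h2; rewrite -scaleN1r; apply/span_modO_add/span_modO_scale. Qed.

Lemma span_modO_sum (I : eqType) (r : seq I) (F : I -> V) :
  (forall i, i \in r -> span_modO (F i)) -> span_modO (\sum_(i <- r) F i).
Proof.
move=> h; rewrite big_seq; apply: (big_ind span_modO) => //.
  by apply: span_modO_Ocirc; apply: Span0.
exact: span_modO_add.
Qed.

Lemma span_modO_Span (P : V -> Prop) y :
  Span P y -> (forall x, P x -> span_modO x) -> span_modO y.
Proof.
move=> Py h; elim: Py => [||c x1 x2 _ h1 _ h2]; last exact: span_modO_lc.
  by apply: span_modO_Ocirc; apply: Span0.
exact: h.
Qed.

End Congruence.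

Definition normal_monom K (V : VOA K) (n : nat) (u : V) (W : V -> Prop) (y : V) :=
  exists (ii : seq nat) (w : V), [/\ size ii = (2 * n).+1, W w & y = pmon u ii w].

Section Reduction.
Variables (K : numClosedFieldType) (V : VOA K) (u : V) (W : V -> Prop).
Hypothesis Wstrong : acts_strongly u W.

Lemma perm_prop_gmon (L L' : seq (V * int)) v :
  perm_eq L' L -> (0 < size L)%N -> (forall p, p \in L -> Vu u p.1) -> W v ->
  Fr u (size L).-1 v (gmon L v - gmon L' v).
Proof.
move=> hp hs hv hw; have /tuple_permP [s ->] : perm_eq L' (in_tuple L) by [].
have := Wstrong.1 (size L) s (fun i => (tnth (in_tuple L) i).1) (fun i => (tnth (in_tuple L) i).2)
  v hs (fun i => hv _ (mem_tnth i (in_tuple L))) hw.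
have -> : [seq ((tnth (in_tuple L) i).1, (tnth (in_tuple L) i).2) | i <- enum 'I_(size L)] = L.
  by rewrite -[RHS](map_tnth_enum (in_tuple L)); apply: eq_map => i; case: (tnth _ i).
congr (Fr _ _ _ (_ - gmon _ _)); apply: eq_map => i; by case: (tnth _ _).
Qed.

Lemma Fr_monom_perm r ks1 ks2 v : perm_eq ks1 ks2 -> size ks1 = r.+1 -> W v ->
  Fr u r v (monom u ks1 v - monom u ks2 v).
Proof.
move=> hp hs Wv; rewrite !monom_gmon.
have := @perm_prop_gmon [seq (u, (k.+1)%:Z) | k <- ks1] [seq (u, (k.+1)%:Z) | k <- ks2] v.
rewrite size_map hs; apply=> //; first by rewrite perm_map // perm_sym.
by move=> p /mapP [k _ ->]; apply: Vu_u.
Qed.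

Lemma Fr_mode_nonneg rest (j : int) v : W v -> 0 <= j ->
  Fr u (size rest) v (mode u j (monom u rest v)).
Proof.
move=> Wv j0; set L := [seq (u, (k.+1)%:Z) | k <- rest].
have := @perm_prop_gmon ((u, - j) :: L) (rcons L (u, - j)) v.
rewrite /= size_map perm_rcons perm_refl => /(_ isT isT).
have Lu p : p \in (u, - j) :: L -> Vu u p.1.
  by rewrite inE => /orP [/eqP -> | /mapP [k _ ->]]; apply: Vu_u.
move/(_ Lu Wv); rewrite gmon_rcons /= !opprK (Wstrong.2 u v j (Vu_u u) Wv j0).
by rewrite gmon0 subr0 -monom_gmon.
Qed.

Variables (n : nat) (wu : int).
Hypothesis u_homog : homog wu u.

Local Notation G := (normal_monom n u W).

Lemma mode_reduce k x : (2 * n < k)%N ->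
  exists c : nat -> K, Ocirc n (mode u (- (k.+1)%:Z) x
    + \sum_(1 <= i < trunc u x + k.+1) c i *: mode u (i%:Z - (k.+1)%:Z) x).
Proof.
move=> hk; exists (binz (wu + n%:Z + (k - (2 * n).+1)%:Z)).
have e : (2 * n + 2 + (k - (2 * n).+1) = k.+1)%N by lia.
have := @resY_Ocirc _ V n (k - (2 * n).+1) wu u x (trunc u x + k.+1) u_homog.
rewrite e => /(_ (leqnn _)).
rewrite /resY -(big_mkord xpredT (fun i => binz _ i *: mode u (i%:Z - (k.+1)%:Z) x)).
by rewrite big_ltn ?addnS // binz0 scale1r sub0r.
Qed.

Lemma monom_span_modO_step r v : W v ->
  (forall ks, (size ks <= r)%N -> span_modO n G (monom u ks v)) ->
  forall ks, size ks = r.+1 -> span_modO n G (monom u ks v).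
Proof.
move=> Wv IHr; have FrG y : Fr u r v y -> span_modO n G y.
  by move/span_modO_Span; apply=> _ [ks [hks ->]]; apply: IHr.
have permG ks1 ks2 : perm_eq ks1 ks2 -> size ks2 = r.+1 ->
    span_modO n G (monom u ks1 v) -> span_modO n G (monom u ks2 v).
  move=> hp hs h1; rewrite -(subKr (monom u ks1 v) (monom u ks2 v)).
  by apply: span_modO_sub h1 (FrG _ (Fr_monom_perm hp _ Wv)); rewrite (perm_size hp).
move=> ks; have [s] := ubnP (sumn ks); elim: s ks => // s IHs ks hsum hsz.
have [ks_small | /allPn[k kin hk]] := boolP (all (fun k => k < (2 * n).+1)%N ks).
  apply: (permG _ _ (perm_pm_exps_count ks_small) hsz).
  rewrite -pm_monom; apply: span_modO_in.
  by exists [seq count_mem j ks | j <- iota 0 (2 * n).+1], v; rewrite size_map size_iota.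
have hpk := perm_to_rem kin; set rest := rem k ks in hpk.
have hrest : size rest = r by rewrite size_rem // hsz.
have hsum' : (k + sumn rest <= s)%N.
  by rewrite -ltnS -[(k + _)%N]/(sumn (k :: rest)) -(perm_sumn hpk).
apply: (permG (k :: rest)) => //=; first by rewrite perm_sym.
have k_big : (2 * n < k)%N by rewrite ltnNge -ltnS.
have [c hO] := @mode_reduce k (monom u rest v) k_big.
set S := \sum_(1 <= i < _) _ in hO; rewrite -[mode u _ (monom u rest v)](addrK S).
apply: span_modO_sub; first exact: span_modO_Ocirc.
apply: span_modO_sum => i; rewrite mem_index_iota => /andP[i_gt0 _].
apply: span_modO_scale; case: (ltnP k i) => [k_lt_i | i_le_k].
  by apply: FrG; rewrite -hrest; apply: Fr_mode_nonneg => //; lia.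
have -> : i%:Z - (k.+1)%:Z = - ((k - i).+1)%:Z by lia.
by apply: (IHs ((k - i)%N :: rest)); rewrite /= ?hrest //; lia.
Qed.

Lemma monom_span_modO ks v : W v -> span_modO n G (monom u ks v).
Proof.
move=> Wv; have [r] := ubnP (size ks); elim: r ks => // r IHr ks.
rewrite ltnS leq_eqVlt => /orP[/eqP hs|]; last exact: IHr.
case: r hs IHr => [|r] hs IHr.
  rewrite (size0nil hs); apply: span_modO_in.
  by exists (nseq (2 * n).+1 0%N), v; rewrite size_nseq /pmon pm_nseq0.
by apply: monom_span_modO_step hs => // ks' hs'; apply: IHr; rewrite ltnS.
Qed.

End Reduction.

Section GeneratedAlgebra.
Variables (K : numClosedFieldType) (V : VOA K) (n : nat).

Lemma On_Ocirc (y : V) : Ocirc n y -> On n y.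
Proof. by exists 0, y; split; rewrite ?add0r //; exists 0; rewrite !raddf0 addr0. Qed.

Lemma GenAlg_sub (X Y : V -> Prop) :
  (forall x, X x -> GenAlg n Y x) -> forall v, GenAlg n X v -> GenAlg n Y v.
Proof.
move=> XY v; elim=> {v} [v /GA_O | | | c x y _ hx _ hy | x y _ hx _ hy] //.
- exact: GA_one.
- exact: GA_lc.
- exact: GA_mul.
Qed.

Lemma GenAlg_Span (X P : V -> Prop) y :
  Span P y -> (forall x, P x -> GenAlg n X x) -> GenAlg n X y.
Proof.
move=> Py PX; elim: Py => [|x /PX //|c x1 x2 _ h1 _ h2]; last exact: GA_lc.
by apply/GA_O/On_Ocirc; apply: Span0.
Qed.

Lemma GenAlg_span_modO (X : V -> Prop) y : span_modO n X y -> GenAlg n X y.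
Proof.
move=> [x [Xx Oyx]]; rewrite -(subrK x y) -[y - x]scale1r.
apply: GA_lc; first exact/GA_O/On_Ocirc.
by apply: (GenAlg_Span Xx) => z Xz; apply: GA_gen.
Qed.

End GeneratedAlgebra.

Lemma acts_strongly_vac K (V : VOA K) (u : V) :
  perm_prop u (Vu u) -> acts_strongly u (fun w => w = vac V).
Proof.
move=> Vu_perm; split; last by move=> a w j _ -> /mode_vac_pos.
by move=> m s us ks v m0 Vus ->; apply: Vu_perm => //; apply: SpanIn; exists [::].
Qed.

Theorem proposition3p6 (K : numClosedFieldType) (V : VOA K) (n : nat)
  (u : V) (wu : int) (Hhom : homog wu u) (Hwt : - (n%:Z) <= wu)
  (Hsub : forall a b m, Vu u a -> Vu u b -> Vu u (mode a m b))
  (Hperm : perm_prop u (Vu u)) :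
  (forall v : V,
     GenAlg n (Vu u) v <->
     GenAlg n (fun w => exists ii : seq nat,
                  size ii = (2 * n).+1 /\ w = pmon u ii (vac V)) v)
  /\
  (forall W : V -> Prop, acts_strongly u W ->
     forall (ks : seq nat) (v : V), W v ->
       exists x : V,
         Span (fun y => exists (ii : seq nat) (w : V),
                  [/\ size ii = (2 * n).+1, W w & y = pmon u ii w]) x
         /\ Ocirc n (monom u ks v - x)).
Proof.
split=> [v|W Wstrong ks v Wv]; last exact: (monom_span_modO Wstrong n Hhom ks Wv).
split; apply: GenAlg_sub => {v} x.
  rewrite /Vu => Vx; apply: (GenAlg_Span Vx) => _ [ks ->].
  have := monom_span_modO (acts_strongly_vac Hperm) n Hhom ks (erefl (vac V)).
  move/GenAlg_span_modO; apply: GenAlg_sub => _ [ii [_ [hs -> ->]]].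
  by apply: GA_gen; exists ii.
by move=> [ii [_ ->]]; apply/GA_gen/SpanIn; exists (pm_exps 0 ii); apply: pm_monom.
Qed.
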